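(* The homomorphism $\mathcal{B}_{-1}:B_{2n+1}\to Sp(2n,\mathbb{R})$ lifts to a homomorphism $\widetilde{\mathcal{B}}_{-1}:B_{2n+1}\to\widetilde{Sp}(2n,\mathbb{R})$, i.e. there is a homomorphism $\widetilde{\mathcal{B}}_{-1}$ with $p\circ\widetilde{\mathcal{B}}_{-1}=\mathcal{B}_{-1}$, where $p:\widetilde{Sp}(2n,\mathbb{R})\to Sp(2n,\mathbb{R})$ is the universal covering map.
   Context: $B_{2n+1}$ is the braid group on $2n+1$ strands with standard generators $\sigma_1,\dots,\sigma_{2n}$. Let $\Sigma_n$ be the double cover of the disk branched at $2n+1$ points (a genus $n$ surface with one boundary component); $B_{2n+1}$ acts on $\Sigma_n$ with $\sigma_i$ lifting to a positive Dehn twist about a nonseparating simple closed curve $C_i$, the $C_i$ forming a chain. $\mathcal{B}_{-1}$ is the induced action on $H_1(\Sigma_n,\partial\Sigma_n;\mathbb{R})\cong\mathbb{R}^{2n}$, which preserves the intersection pairing $\omega$ (a symplectic form), so $\mathcal{B}_{-1}$ takes values in $Sp(2n,\mathbb{R})$ (this is the Burau representation at $-1$). Concretely, orienting the $C_i$ so that $\omega(C_i,C_j)=\delta_{i+1,j}-\delta_{i-1,j}$, $\mathcal{B}_{-1}(\sigma_i)(x)=x+\omega(C_i,x)C_i$. $\widetilde{Sp}(2n,\mathbb{R})$ is the universal cover, viewed as homotopy classes rel endpoints of paths in $Sp(2n,\mathbb{R})$ starting at the identity. *)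

From HB Require Import structures.
From mathcomp Require Import all_boot all_order all_algebra.
From mathcomp Require Import all_classical all_reals all_analysis.
From mathcomp Require Import Rstruct Rstruct_topology.
Set Implicit Arguments. Unset Strict Implicit. Unset Printing Implicit Defensive.
Import Order.TTheory GRing.Theory Num.Theory.
Local Open Scope ring_scope.
Local Open Scope classical_set_scope.

Definition Rr : realType := Rdefinitions.R.

(* Gram matrix of the intersection form omega in the basis C_0,...,C_{m-1}
   (the chain curves; C_{i} here is the paper's C_{i+1}):
   omega(C_i, C_j) = delta_{i+1,j} - delta_{i-1,j}. *)
Definition omega_mx (m : nat) : 'M[Rr]_m :=
  \matrix_(i, j) ((j == i.+1 :> nat)%:R - (i == j.+1 :> nat)%:R).

Definition symplectic (m : nat) (M : 'M[Rr]_m) : Prop :=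
  M^T *m omega_mx m *m M = omega_mx m.

(* B_{-1}(sigma_{i+1}) : x |-> x + omega(C_i, x) C_i, in coordinates. *)
Definition burau_m1 (m : nat) (i : 'I_m) : 'M[Rr]_m :=
  1%:M + delta_mx i i *m omega_mx m.

Definition sp_path (m : nat) (g : Rr -> 'M[Rr]_m) : Prop :=
  (forall i j, {within `[0%R, 1%R], continuous (fun t => g t i j)}) /\
  (forall t, t \in `[0%R, 1%R] -> symplectic (g t)) /\
  g 0 = 1%:M.

Definition sp_homotopic (m : nat) (g h : Rr -> 'M[Rr]_m) : Prop :=
  exists H : Rr -> Rr -> 'M[Rr]_m,
    (forall i j, {within `[0%R, 1%R] `*` `[0%R, 1%R],
                   continuous (fun p : Rr * Rr => H p.1 p.2 i j)}) /\
    (forall s t, s \in `[0%R, 1%R] -> t \in `[0%R, 1%R] -> symplectic (H s t)) /\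
    (forall t, t \in `[0%R, 1%R] -> H 0 t = g t /\ H 1 t = h t) /\
    (forall s, s \in `[0%R, 1%R] -> H s 0 = 1%:M /\ H s 1 = g 1).

(* Group law of the universal cover (on representatives): pointwise product,
   which is homotopic rel endpoints to concatenation. *)
Definition path_mul (m : nat) (g h : Rr -> 'M[Rr]_m) : Rr -> 'M[Rr]_m :=
  fun t => g t *m h t.

Definition path_end (m : nat) (g : Rr -> 'M[Rr]_m) : 'M[Rr]_m := g 1.

(* Lift each generator sigma_k to the straight path of transvections
   t |-> (x |-> x + t omega(C_k, x) C_k) from the identity to B_{-1}(sigma_k).
   These matrices, and products of two of them, have the form 1 + D omega with
   D supported on two coordinates {i, j}; writing D = [[a, b], [c, d]] there,
   1 + D omega is symplectic as soon as b - c = omega(C_i, C_j) (ad - bc).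
   For far-apart generators omega(C_i, C_j) = 0 and the two products agree
   pointwise.  For adjacent ones both sides of the braid relation are paths on
   the quadric b - c = ad - bc with the same endpoints, and an explicit
   polynomial homotopy on that quadric joins them. *)

From HB Require Import structures.
From mathcomp Require Import all_boot all_order all_algebra.
From mathcomp Require Import all_classical all_reals all_analysis.
From mathcomp Require Import Rstruct Rstruct_topology.
From mathcomp Require Import ring.
Import Order.TTheory GRing.Theory Num.Theory.
Import numFieldNormedType.Exports.
Set Implicit Arguments. Unset Strict Implicit. Unset Printing Implicit Defensive.
Local Open Scope ring_scope.

Section Shear.
Variables (R : comRingType) (m : nat) (W : 'M[R]_m).

Definition shearmx (D : 'M[R]_m) : 'M[R]_m := 1%:M + D *m W.

Lemma shearmxM D D' : shearmx D *m shearmx D' = shearmx (D + D' + D *m W *m D').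
Proof.
rewrite /shearmx mulmxDl mul1mx mulmxDr mulmx1 !mulmxDl !addrA.
by rewrite !mulmxA [1%:M + D' *m W + _]addrAC.
Qed.

Lemma shearmx_form_invariant D : W^T = - W -> D - D^T = D^T *m W *m D ->
  (shearmx D)^T *m W *m shearmx D = W.
Proof.
move=> W_skew hD.
suff -> : (shearmx D)^T *m W *m shearmx D
          = W + W *m (D - D^T - D^T *m W *m D) *m W.
  by rewrite hD subrr mulmx0 mul0mx addr0.
rewrite /shearmx [(_ + _)^T]raddfD /= trmx1 trmx_mul W_skew.
rewrite !(mulmxDl, mulmxDr, mulmxN, mulNmx, mul1mx, mulmx1, mulmxA).
move: (W *m D *m W) (W *m D^T *m W) (W *m D^T *m W *m D *m W) => X Y Z.
by apply/matrixP => r s; rewrite !mxE; ring.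
Qed.

Lemma mul_delta_mx_mid (k l k' l' : 'I_m) (A : 'M[R]_m) :
  delta_mx k l *m A *m delta_mx k' l' = A l k' *: delta_mx k l'.
Proof.
rewrite -(mul_delta_mx (0 : 'I_1) k l) -(mul_delta_mx (0 : 'I_1) k' l').
rewrite -!mulmxA (mulmxA (delta_mx 0 l)) -rowE (mulmxA (row l A)) -colE.
by rewrite [col _ _]mx11_scalar mulmxA mul_mx_scalar -scalemxAl mul_delta_mx !mxE.
Qed.

End Shear.

Section PairMatrix.
Variables (R : comRingType) (m : nat) (W : 'M[R]_m) (i j : 'I_m).

Definition pair_mx (a b c d : R) : 'M[R]_m :=
  a *: delta_mx i i + b *: delta_mx i j + c *: delta_mx j i + d *: delta_mx j j.

Lemma pair_mx_scale_l a : pair_mx a 0 0 0 = a *: delta_mx i i.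
Proof. by rewrite /pair_mx !scale0r !addr0. Qed.

Lemma pair_mx_scale_r d : pair_mx 0 0 0 d = d *: delta_mx j j.
Proof. by rewrite /pair_mx !scale0r !add0r. Qed.

Lemma shearmx_pair0 : shearmx W (pair_mx 0 0 0 0) = 1%:M.
Proof. by rewrite /shearmx /pair_mx !scale0r !addr0 mul0mx addr0. Qed.

Lemma trmx_pair_mx a b c d : (pair_mx a b c d)^T = pair_mx a c b d.
Proof.
rewrite /pair_mx !raddfD /= !linearZ /= !trmx_delta.
by rewrite -!addrA; congr (_ + _); rewrite addrCA.
Qed.

Hypotheses (Wii : W i i = 0) (Wjj : W j j = 0) (Wji : W j i = - W i j).

Lemma pair_mx_mul_mid a b c d a' b' c' d' :
  pair_mx a b c d *m W *m pair_mx a' b' c' d' =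
  W i j *: pair_mx (a * c' - b * a') (a * d' - b * b')
                   (c * c' - d * a') (c * d' - d * b').
Proof.
rewrite /pair_mx !(mulmxDl, mulmxDr) -!(scalemxAl, scalemxAr) !mul_delta_mx_mid.
rewrite Wii Wjj Wji.
move: (delta_mx i i) (delta_mx i j) (delta_mx j i) (delta_mx j j) => e1 e2 e3 e4.
by apply/matrixP => r s; rewrite !mxE; ring.
Qed.

Lemma shearmx_pairM a b c d a' b' c' d' :
  shearmx W (pair_mx a b c d) *m shearmx W (pair_mx a' b' c' d') =
  shearmx W (pair_mx (a + a' + W i j * (a * c' - b * a'))
                     (b + b' + W i j * (a * d' - b * b'))
                     (c + c' + W i j * (c * c' - d * a'))
                     (d + d' + W i j * (c * d' - d * b'))).
Proof.
rewrite shearmxM pair_mx_mul_mid; congr shearmx.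
by apply/matrixP => r s; rewrite !mxE; ring.
Qed.

Lemma shearmx_pair_form_invariant a b c d : W^T = - W ->
  b - c = W i j * (a * d - b * c) ->
  (shearmx W (pair_mx a b c d))^T *m W *m shearmx W (pair_mx a b c d) = W.
Proof.
move=> W_skew habcd; apply: shearmx_form_invariant => //.
rewrite trmx_pair_mx pair_mx_mul_mid.
have had : W i j * (a * d) = b - c + W i j * (b * c) by rewrite habcd; ring.
by apply/matrixP => r s; rewrite !mxE; ring: had.
Qed.

End PairMatrix.

Section Continuity.
Variables (K : numFieldType) (T : topologicalType).

Lemma continuous_addf (f g : T -> K) :
  continuous f -> continuous g -> continuous (fun x => f x + g x).
Proof. by move=> cf cg x; exact: (@continuousD K K^o T f g x (cf x) (cg x)). Qed.

Lemma continuous_oppf (f : T -> K) : continuous f -> continuous (fun x => - f x).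
Proof. by move=> cf x; exact: (@continuousN K K^o T f x (cf x)). Qed.

Lemma continuous_mulf (f g : T -> K) :
  continuous f -> continuous g -> continuous (fun x => f x * g x).
Proof. by move=> cf cg x; exact: (continuousM (cf x) (cg x)). Qed.

End Continuity.

Ltac solve_continuous := solve [
  repeat match goal with
  | cf : continuous ?f |- continuous ?f => exact: cf
  | |- continuous (fun x => - @?f x) => apply: continuous_oppf
  | |- continuous (fun x => @?f x + @?g x) => apply: continuous_addf
  | |- continuous (fun x => @?f x * @?g x) => apply: continuous_mulf
  | |- continuous fst => by move=> ?; apply: cvg_fst
  | |- continuous snd => by move=> ?; apply: cvg_snd
  | |- continuous (fun x => x.2) => by move=> ?; apply: cvg_snd
  | |- continuous (fun x => x) => by move=> ?; apply: cvg_id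
  | |- continuous (fun _ => _) => exact: cst_continuous
  end ].

Lemma continuous_shearmx_pair (K : numFieldType) (T : topologicalType) m
    (W : 'M[K]_m) (i j : 'I_m) (a b c d : T -> K) :
  continuous a -> continuous b -> continuous c -> continuous d ->
  forall r s,
    continuous (fun x => shearmx W (pair_mx i j (a x) (b x) (c x) (d x)) r s).
Proof.
move=> ca cb cc cd r s.
have -> : (fun x => shearmx W (pair_mx i j (a x) (b x) (c x) (d x)) r s) =
          (fun x => (r == s)%:R + (a x * (delta_mx i i *m W) r s
            + b x * (delta_mx i j *m W) r s + c x * (delta_mx j i *m W) r s
            + d x * (delta_mx j j *m W) r s)).
  by apply: funext => x; rewrite /shearmx /pair_mx !mulmxDl -!scalemxAl !mxE.
solve_continuous.
Qed.

Section Omega.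
Variable m : nat.
Local Notation Om := (omega_mx m).

Lemma omega_mx_diag (k : 'I_m) : Om k k = 0.
Proof. by rewrite mxE subrr. Qed.

Lemma omega_mx_swap (i j : 'I_m) : Om j i = - Om i j.
Proof. by rewrite !mxE opprB. Qed.

Lemma omega_mx_skew : Om^T = - Om.
Proof. by apply/matrixP => r s; rewrite [LHS]mxE [RHS]mxE omega_mx_swap. Qed.

Lemma omega_mx_succ (i j : 'I_m) : j = i.+1 :> nat -> Om i j = 1.
Proof. by move=> hij; rewrite mxE hij eqxx ltn_eqF // subr0. Qed.

Lemma omega_mx_far (i j : 'I_m) : (i.+1 < j)%N -> Om i j = 0.
Proof.
move=> hij; rewrite mxE gtn_eqF // ltn_eqF ?subrr //.
by rewrite ltnS ltnW // ltnW.
Qed.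

End Omega.

Section PairHomotopy.
Variables (m : nat) (i j : 'I_m) (a b c d : Rr -> Rr -> Rr).
Local Notation Om := (omega_mx m).
Local Notation H s t :=
  (shearmx Om (pair_mx i j (a s t) (b s t) (c s t) (d s t))).

Hypotheses (ca : continuous (fun p : Rr * Rr => a p.1 p.2))
           (cb : continuous (fun p : Rr * Rr => b p.1 p.2))
           (cc : continuous (fun p : Rr * Rr => c p.1 p.2))
           (cd : continuous (fun p : Rr * Rr => d p.1 p.2)).
Hypothesis habcd :
  forall s t, b s t - c s t = Om i j * (a s t * d s t - b s t * c s t).

Lemma sp_homotopic_shearmx_pair (g h : Rr -> 'M[Rr]_m) :
  (forall t, H 0 t = g t /\ H 1 t = h t) ->
  (forall s, H s 0 = 1%:M /\ H s 1 = g 1) ->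
  sp_homotopic g h.
Proof.
move=> ends_s ends_t; exists (fun s t => H s t); split; [|split; [|split]].
- move=> r u; apply: continuous_subspaceT.
  by apply: continuous_shearmx_pair.
- move=> s t _ _; exact: (shearmx_pair_form_invariant (omega_mx_diag i)
    (omega_mx_diag j) (omega_mx_swap i j) (omega_mx_skew m) (habcd s t)).
- by move=> t _; exact: ends_s.
- by move=> s _; exact: ends_t.
Qed.

End PairHomotopy.

Section BraidRelations.
Variable m : nat.
Local Notation Om := (omega_mx m).

Definition transvection_path (k : 'I_m) (t : Rr) : 'M[Rr]_m :=
  shearmx Om (t *: delta_mx k k).

Local Notation tau := transvection_path.

Lemma transvection_path_pair_l (i j : 'I_m) t :
  tau i t = shearmx Om (pair_mx i j t 0 0 0).
Proof. by rewrite pair_mx_scale_l. Qed.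

Lemma transvection_path_pair_r (i j : 'I_m) t :
  tau j t = shearmx Om (pair_mx i j 0 0 0 t).
Proof. by rewrite pair_mx_scale_r. Qed.

Let shearmx_pairM_omega (i j : 'I_m) :=
  shearmx_pairM (omega_mx_diag i) (omega_mx_diag j) (omega_mx_swap i j).

Lemma transvection_path_sp_path k : sp_path (tau k).
Proof.
have tau_pair := transvection_path_pair_l k k.
split; [|split].
- move=> r s; apply: continuous_subspaceT.
  have -> : (fun t => tau k t r s) =
            (fun t => shearmx Om (pair_mx k k t 0 0 0) r s).
    by apply: funext => t; rewrite tau_pair.
  by apply: continuous_shearmx_pair; solve_continuous.
- move=> t _; rewrite /symplectic tau_pair.
  apply: (shearmx_pair_form_invariant (omega_mx_diag k) (omega_mx_diag k) _
                                      (omega_mx_skew m)).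
  + by rewrite omega_mx_diag oppr0.
  + by rewrite omega_mx_diag mul0r subrr.
- by rewrite tau_pair; exact: shearmx_pair0.
Qed.

Lemma transvection_path_end k : path_end (tau k) = burau_m1 k.
Proof. by rewrite /path_end /transvection_path scale1r. Qed.

Lemma transvection_path_braid (i j : 'I_m) : j = i.+1 :> nat ->
  sp_homotopic (path_mul (path_mul (tau i) (tau j)) (tau i))
               (path_mul (path_mul (tau j) (tau i)) (tau j)).
Proof.
move=> hij; have Om_ij := omega_mx_succ hij.
have ABA t : path_mul (path_mul (tau i) (tau j)) (tau i) t =
             shearmx Om (pair_mx i j (t * (2 - t * t)) (t * t) (- (t * t)) t).
  rewrite /path_mul (transvection_path_pair_l i j) (transvection_path_pair_r i j).
  by rewrite !shearmx_pairM_omega Om_ij; f_equal; f_equal; ring.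
have BAB t : path_mul (path_mul (tau j) (tau i)) (tau j) t =
             shearmx Om (pair_mx i j t (t * t) (- (t * t)) (t * (2 - t * t))).
  rewrite /path_mul (transvection_path_pair_l i j) (transvection_path_pair_r i j).
  by rewrite !shearmx_pairM_omega Om_ij; f_equal; f_equal; ring.
(* a and d interpolate linearly between the two sides, c = -t^2 is common to
   both, and b solves b (1 + c) = a d + c, i.e. b - c = a d - b c. *)
apply: (@sp_homotopic_shearmx_pair _ i j
  (fun s t => t * (1 + (1 - s) * (1 - t * t)))
  (fun s t => t * t * (1 + s * (1 - s) * (1 - t * t)))
  (fun s t => - (t * t))
  (fun s t => t * (1 + s * (1 - t * t)))); [solve_continuous.. | | |].
- by move=> s t; rewrite Om_ij; ring.
- by move=> t; rewrite ABA BAB; split; f_equal; f_equal; ring.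
- move=> s; rewrite ABA; split; last by f_equal; f_equal; ring.
  by rewrite -[RHS](shearmx_pair0 Om i j); f_equal; f_equal; ring.
Qed.

Lemma transvection_path_commute (i j : 'I_m) : (i.+1 < j)%N ->
  sp_homotopic (path_mul (tau i) (tau j)) (path_mul (tau j) (tau i)).
Proof.
move=> hij; have Om_ij := omega_mx_far hij.
have AB t : path_mul (tau i) (tau j) t = shearmx Om (pair_mx i j t 0 0 t).
  rewrite /path_mul (transvection_path_pair_l i j) (transvection_path_pair_r i j).
  by rewrite shearmx_pairM_omega Om_ij; f_equal; f_equal; ring.
have BA t : path_mul (tau j) (tau i) t = shearmx Om (pair_mx i j t 0 0 t).
  rewrite /path_mul (transvection_path_pair_l i j) (transvection_path_pair_r i j).
  by rewrite shearmx_pairM_omega Om_ij; f_equal; f_equal; ring.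
apply: (@sp_homotopic_shearmx_pair _ i j (fun _ t => t) (fun _ _ => 0)
  (fun _ _ => 0) (fun _ t => t)); [solve_continuous.. | | |].
- by move=> s t; rewrite Om_ij subrr mul0r.
- by move=> t; rewrite AB BA.
- by move=> s; rewrite AB; split=> //; exact: shearmx_pair0.
Qed.

End BraidRelations.

Theorem lemma3p3 (n : nat) :
  exists gam : 'I_(2 * n) -> (Rr -> 'M[Rr]_(2 * n)),
    (forall i, sp_path (gam i) /\ path_end (gam i) = burau_m1 i) /\
    (forall i j : 'I_(2 * n), (j : nat) = i.+1 ->
       sp_homotopic (path_mul (path_mul (gam i) (gam j)) (gam i))
                    (path_mul (path_mul (gam j) (gam i)) (gam j))) /\
    (forall i j : 'I_(2 * n), (i.+1 < j)%N ->
       sp_homotopic (path_mul (gam i) (gam j)) (path_mul (gam j) (gam i))).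
Proof.
exists (@transvection_path (2 * n)); split; [|split].
- move=> k; split; first exact: transvection_path_sp_path.
  exact: transvection_path_end.
- exact: transvection_path_braid.
- exact: transvection_path_commute.
Qed.
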